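(* Let $\mathbf U$ be a real $3\times3$ positive-definite symmetric matrix, let $\hat{\mathbf e}\in\mathbb R^3$ with $|\hat{\mathbf e}|=1$, and define $\hat{\mathbf U}=(-\mathbf I+2\hat{\mathbf e}\otimes\hat{\mathbf e})\mathbf U(-\mathbf I+2\hat{\mathbf e}\otimes\hat{\mathbf e})$. Let $\hat{\mathbf R}\in\mathrm{SO}(3)$ and $\mathbf a,\mathbf n\in\mathbb R^3$ with $\mathbf a\neq 0$, $\mathbf n\neq0$ satisfy $\hat{\mathbf R}\hat{\mathbf U}=\mathbf U+\mathbf a\otimes\mathbf n$. Then the equation $$\mathbf R\big[f(\mathbf U+\mathbf a\otimes\mathbf n)+(1-f)\mathbf U\big]-\mathbf I=\mathbf b\otimes\mathbf m$$ has a solution $\mathbf R\in\mathrm{SO}(3)$, $\mathbf b,\mathbf m\in\mathbb R^3$ for each $f\in[0,1]$ if and only if the following three conditions hold: (CC1) $\lambda_2=1$, where $\lambda_2$ is the middle eigenvalue of $\mathbf U$; (CC2) $\mathbf a\cdot\mathbf U\,\mathrm{cof}(\mathbf U^2-\mathbf I)\,\mathbf n=0$; (CC3) $\mathrm{tr}\,\mathbf U^2-\det\mathbf U^2-\frac{|\mathbf a|^2|\mathbf n|^2}{4}-2\ge 0$.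
   Context: $\mathbf a\otimes\mathbf n$ denotes the matrix with $(\mathbf a\otimes\mathbf n)\mathbf x=(\mathbf n\cdot\mathbf x)\mathbf a$. For a $3\times3$ matrix $\mathbf A$, $\mathrm{cof}\,\mathbf A$ is its cofactor matrix, $(\mathrm{cof}\,\mathbf A)_{ij}=(-1)^{i+j}\det\hat{\mathbf A}_{ij}$, where $\hat{\mathbf A}_{ij}$ is the submatrix obtained by deleting row $i$ and column $j$. Conditions (CC1)–(CC3) are called the cofactor conditions. *)

From HB Require Import structures.
From mathcomp Require Import all_boot all_order all_algebra.
From mathcomp Require Import reals.
Set Implicit Arguments. Unset Strict Implicit. Unset Printing Implicit Defensive.
Import Order.TTheory GRing.Theory Num.Theory.
Local Open Scope ring_scope.

Section Defs.
Variable R : realType.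

Definition tens (a n : 'cV[R]_3) : 'M[R]_3 := a *m n^T.

Definition dotv (a b : 'cV[R]_3) : R := (a^T *m b) 0 0.
Definition norm2 (a : 'cV[R]_3) : R := dotv a a.

Definition cofm (A : 'M[R]_3) : 'M[R]_3 := \matrix_(i, j) cofactor A i j.

Definition is_SO3 (Q : 'M[R]_3) : Prop := Q^T *m Q = 1%:M /\ \det Q = 1.

Definition sym_posdef (U : 'M[R]_3) : Prop :=
  U^T = U /\ forall x : 'cV[R]_3, x != 0 -> 0 < dotv x (U *m x).

Definition middle_eigenvalue (U : 'M[R]_3) (l : R) : Prop :=
  exists l1 l3 : R, l1 <= l /\ l <= l3 /\
    char_poly U = ('X - l1%:P) * ('X - l%:P) * ('X - l3%:P).

End Defs.

From HB Require Import structures.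
From mathcomp Require Import all_boot all_order all_algebra.
From mathcomp Require Import reals.
From mathcomp Require Import ring lra.
From Stdlib Require Import Classical.
Import Order.TTheory GRing.Theory Num.Theory.
Local Open Scope ring_scope.
Set Implicit Arguments. Unset Strict Implicit. Unset Printing Implicit Defensive.

(* For [det F > 0], a rotation [Q] with [Q F - I] of rank one exists iff the
   Cauchy-Green tensor [C = F^T F] satisfies [det (C - I) = 0] and
   [det C - tr C + 2 <= 0] (Ball-James): the second condition says that the
   second invariant of the singular symmetric matrix [C - I] is nonpositive, so
   [C - I] splits as [m ⊗ c + c ⊗ m], the Cauchy-Green defect of some [I + b ⊗ m'].
   Along [F_f = U + f a ⊗ n] the twinning relation keeps [det F_f = det U], makes
   [det (C_f - I)] equal to [det (U^2 - I) + 2 (CC2 term) f (1 - f)], and, since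
   it forces [2 a.U n = - |a|^2 |n|^2], makes [det C_f - tr C_f + 2] equal to
   [det U^2 - tr U^2 + 2 + |a|^2 |n|^2 f (1 - f)].  Both conditions therefore hold
   on [0, 1] iff they hold at [f = 0] and [f = 1/2], i.e. iff (CC1)-(CC3). *)

Section Coordinates.
Variable R : comNzRingType.

Definition mx3 (a b c d e f g h k : R) : 'M[R]_3 :=
  \matrix_(i, j) nth 0 (nth [::] [:: [:: a; b; c]; [:: d; e; f]; [:: g; h; k]] i) j.
Definition cv3 (x y z : R) : 'cV[R]_3 := \matrix_(i, j) nth 0 [:: x; y; z] i.
Definition rv3 (x y z : R) : 'rV[R]_3 := \matrix_(i, j) nth 0 [:: x; y; z] j.

Ltac case3 i := case: i => [[|[|[|//]]] ?].
Ltac case1 i := case: i => [[|//] ?].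

Lemma mx3_entries (A : 'M[R]_3) :
  A = mx3 (A 0 0) (A 0 1) (A 0 2) (A 1 0) (A 1 1) (A 1 2) (A 2 0) (A 2 1) (A 2 2).
Proof. apply/matrixP => i j; rewrite !mxE; case3 i; case3 j; congr (A _ _); exact: val_inj. Qed.

Lemma sym_mx3_entries (A : 'M[R]_3) : A^T = A ->
  A = mx3 (A 0 0) (A 0 1) (A 0 2) (A 0 1) (A 1 1) (A 1 2) (A 0 2) (A 1 2) (A 2 2).
Proof.
move=> symA; have entryT i j : A j i = A i j by rewrite -{1}symA mxE.
by rewrite {1}(mx3_entries A) (entryT 1 0) (entryT 2 0) (entryT 2 1).
Qed.

Lemma cv3_entries (v : 'cV[R]_3) : v = cv3 (v 0 0) (v 1 0) (v 2 0).
Proof. apply/matrixP => i j; rewrite !mxE; case3 i; case1 j; congr (v _ _); exact: val_inj. Qed.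

Lemma mx3_congr a b c d e f g h k a' b' c' d' e' f' g' h' k' :
  a = a' -> b = b' -> c = c' -> d = d' -> e = e' -> f = f' -> g = g' -> h = h' -> k = k' ->
  mx3 a b c d e f g h k = mx3 a' b' c' d' e' f' g' h' k'.
Proof. by move=> *; subst. Qed.

Lemma cv3_congr a b c a' b' c' : a = a' -> b = b' -> c = c' -> cv3 a b c = cv3 a' b' c'.
Proof. by move=> *; subst. Qed.

Lemma cv3_inj a b c a' b' c' : cv3 a b c = cv3 a' b' c' -> [/\ a = a', b = b' & c = c'].
Proof.
by move/matrixP=> eq_abc; have := eq_abc 0 0; have := eq_abc 1 0; have := eq_abc 2 0; rewrite !mxE.
Qed.

Lemma add_mx3 a b c d e f g h k a' b' c' d' e' f' g' h' k' :
  mx3 a b c d e f g h k + mx3 a' b' c' d' e' f' g' h' k' =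
  mx3 (a+a') (b+b') (c+c') (d+d') (e+e') (f+f') (g+g') (h+h') (k+k').
Proof. by apply/matrixP => i j; rewrite !mxE; case3 i; case3 j. Qed.

Lemma opp_mx3 a b c d e f g h k :
  - mx3 a b c d e f g h k = mx3 (-a) (-b) (-c) (-d) (-e) (-f) (-g) (-h) (-k).
Proof. by apply/matrixP => i j; rewrite !mxE; case3 i; case3 j. Qed.

Lemma scale_mx3 s a b c d e f g h k :
  s *: mx3 a b c d e f g h k = mx3 (s*a) (s*b) (s*c) (s*d) (s*e) (s*f) (s*g) (s*h) (s*k).
Proof. by apply/matrixP => i j; rewrite !mxE; case3 i; case3 j. Qed.

Lemma mul_mx3 a b c d e f g h k a' b' c' d' e' f' g' h' k' :
  mx3 a b c d e f g h k *m mx3 a' b' c' d' e' f' g' h' k' =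
  mx3 (a*a'+b*d'+c*g') (a*b'+b*e'+c*h') (a*c'+b*f'+c*k')
      (d*a'+e*d'+f*g') (d*b'+e*e'+f*h') (d*c'+e*f'+f*k')
      (g*a'+h*d'+k*g') (g*b'+h*e'+k*h') (g*c'+h*f'+k*k').
Proof.
apply/matrixP => i j; rewrite !mxE !big_ord_recr big_ord0 /= !mxE /=.
by case3 i; case3 j; rewrite /= add0r.
Qed.

Lemma trmx_mx3 a b c d e f g h k : (mx3 a b c d e f g h k)^T = mx3 a d g b e h c f k.
Proof. by apply/matrixP => i j; rewrite !mxE; case3 i; case3 j. Qed.

Lemma scalar_mx3 s : (s%:M : 'M[R]_3) = mx3 s 0 0 0 s 0 0 0 s.
Proof. by apply/matrixP => i j; rewrite !mxE; case3 i; case3 j. Qed.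

Lemma zero_mx3 : (0 : 'M[R]_3) = mx3 0 0 0 0 0 0 0 0 0.
Proof. by apply/matrixP => i j; rewrite !mxE; case3 i; case3 j. Qed.

Lemma add_cv3 a b c a' b' c' : cv3 a b c + cv3 a' b' c' = cv3 (a+a') (b+b') (c+c').
Proof. by apply/matrixP => i j; rewrite !mxE; case3 i; case1 j. Qed.

Lemma opp_cv3 a b c : - cv3 a b c = cv3 (-a) (-b) (-c).
Proof. by apply/matrixP => i j; rewrite !mxE; case3 i; case1 j. Qed.

Lemma scale_cv3 s a b c : s *: cv3 a b c = cv3 (s*a) (s*b) (s*c).
Proof. by apply/matrixP => i j; rewrite !mxE; case3 i; case1 j. Qed.

Lemma zero_cv3 : (0 : 'cV[R]_3) = cv3 0 0 0.
Proof. by apply/matrixP => i j; rewrite !mxE; case3 i; case1 j. Qed.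

Lemma cv3_neq0 x y z :
  [|| x != 0, y != 0 | z != 0] -> cv3 x y z != 0.
Proof. by apply: contraTneq; rewrite zero_cv3 => /cv3_inj [-> -> ->]; rewrite eqxx. Qed.

Lemma mul_mx3_cv3 a b c d e f g h k x y z :
  mx3 a b c d e f g h k *m cv3 x y z = cv3 (a*x+b*y+c*z) (d*x+e*y+f*z) (g*x+h*y+k*z).
Proof.
apply/matrixP => i j; rewrite !mxE !big_ord_recr big_ord0 /= !mxE /=.
by case3 i; case1 j; rewrite /= add0r.
Qed.

Lemma trmx_cv3 x y z : (cv3 x y z)^T = rv3 x y z.
Proof. by apply/matrixP => i j; rewrite !mxE; case1 i; case3 j. Qed.

Lemma mul_cv3_rv3 x y z p q r : cv3 x y z *m rv3 p q r =
  mx3 (x * p) (x * q) (x * r) (y * p) (y * q) (y * r) (z * p) (z * q) (z * r).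
Proof.
apply/matrixP => i j; rewrite !mxE big_ord_recr big_ord0 /= !mxE /=.
by case3 i; case3 j; rewrite /= add0r.
Qed.

Lemma mul_rv3_cv3 x y z p q r : (rv3 x y z *m cv3 p q r) 0 0 = x * p + y * q + z * r.
Proof. by rewrite !mxE !big_ord_recr big_ord0 /= !mxE /= add0r. Qed.

Lemma cv3_entry0 x y z : cv3 x y z 0 0 = x. Proof. by rewrite mxE. Qed.
Lemma cv3_entry1 x y z : cv3 x y z 1 0 = y. Proof. by rewrite mxE. Qed.
Lemma cv3_entry2 x y z : cv3 x y z 2 0 = z. Proof. by rewrite mxE. Qed.

Lemma det_mx3 a b c d e f g h k :
  \det (mx3 a b c d e f g h k) = a*e*k - a*f*h - b*d*k + b*f*g + c*d*h - c*e*g.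
Proof.
rewrite (expand_det_row _ 0) !big_ord_recr big_ord0 /= add0r.
rewrite /cofactor !(expand_det_row _ 0) !big_ord_recr !big_ord0 /= !add0r.
by rewrite /cofactor !det_mx11 !mxE /= !expr0 !expr1 /=; ring.
Qed.

Lemma mxtrace_mx3 a b c d e f g h k : \tr (mx3 a b c d e f g h k) = a + e + k.
Proof. by rewrite /mxtrace !big_ord_recr big_ord0 /= !mxE /= add0r. Qed.

End Coordinates.

Lemma cofm_mx3 (R : realType) (a b c d e f g h k : R) :
  cofm (mx3 a b c d e f g h k) =
  mx3 (e*k - f*h) (-(d*k - f*g)) (d*h - e*g)
      (-(b*k - c*h)) (a*k - c*g) (-(a*h - b*g))
      (b*f - c*e) (-(a*f - c*d)) (a*e - b*d).
Proof.
apply/matrixP => i j; rewrite !mxE /cofactor (expand_det_row _ 0) !big_ord_recr big_ord0 /= add0r.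
rewrite /cofactor !det_mx11 !mxE /=.
by case: i => [[|[|[|//]]] ?]; case: j => [[|[|[|//]]] ?]; rewrite /= ?expr0 ?expr1 /=; ring.
Qed.

Ltac mx3_simp :=
  rewrite ?(add_mx3, opp_mx3, scale_mx3, mul_mx3, trmx_mx3, scalar_mx3, zero_mx3,
            add_cv3, opp_cv3, scale_cv3, zero_cv3, mul_mx3_cv3, trmx_cv3, mul_cv3_rv3,
            mul_rv3_cv3, det_mx3, mxtrace_mx3, cofm_mx3, cv3_entry0, cv3_entry1, cv3_entry2).

Section SymmetricSplitting.
Variable R : realType.
Implicit Types (S A : 'M[R]_3) (u v w x y z : 'cV[R]_3) (p q r : R).

Definition sigma2 S := \tr (cofm S).

Definition skew z : 'M[R]_3 :=
  mx3 0 (- z 2 0) (z 1 0) (z 2 0) 0 (- z 0 0) (- z 1 0) (z 0 0) 0.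

Lemma norm2_ge0 v : 0 <= norm2 v.
Proof. rewrite /norm2 /dotv (cv3_entries v); mx3_simp; nra. Qed.

Lemma norm2_eq0 v : norm2 v = 0 -> v = 0.
Proof. rewrite /norm2 /dotv (cv3_entries v); mx3_simp => v0; apply: cv3_congr; nra. Qed.

Lemma cauchy_schwarz_dotv v w : dotv v w ^+ 2 <= norm2 v * norm2 w.
Proof.
rewrite -subr_ge0 /norm2 /dotv (cv3_entries v) (cv3_entries w); mx3_simp.
set x0 := v 0 0; set x1 := v 1 0; set x2 := v 2 0.
set y0 := w 0 0; set y1 := w 1 0; set y2 := w 2 0.
have -> : (x0 * x0 + x1 * x1 + x2 * x2) * (y0 * y0 + y1 * y1 + y2 * y2) -
  (x0 * y0 + x1 * y1 + x2 * y2) ^+ 2 =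
  (x0 * y1 - x1 * y0) ^+ 2 + (x0 * y2 - x2 * y0) ^+ 2 + (x1 * y2 - x2 * y1) ^+ 2 by ring.
by rewrite !addr_ge0 ?sqr_ge0.
Qed.

Lemma colinear_of_cauchy_schwarz_eq v w : v != 0 ->
  dotv v w ^+ 2 = norm2 v * norm2 w -> w = (dotv v w / norm2 v) *: v.
Proof.
move=> v_neq0 eq_cs; set t := dotv v w / norm2 v.
have nv_neq0 : norm2 v != 0 by apply: contra_neq v_neq0; exact: norm2_eq0.
have norm2_sub : norm2 (w - t *: v) = norm2 w - 2 * t * dotv v w + t ^+ 2 * norm2 v.
  by rewrite /norm2 /dotv (cv3_entries w) (cv3_entries v); mx3_simp; ring.
suff /norm2_eq0/eqP : norm2 (w - t *: v) = 0 by rewrite subr_eq0 => /eqP.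
rewrite norm2_sub /t; move: nv_neq0 eq_cs; set N := norm2 v; set P := dotv v w => N_neq0 eq_cs.
have -> : norm2 w = P ^+ 2 / N by rewrite eq_cs mulrAC divff // mul1r.
by field.
Qed.

Lemma trmx_tens u v : (tens u v)^T = tens v u.
Proof. by rewrite /tens trmx_mul trmxK. Qed.

Lemma sym_quad_eq0 S : S^T = S -> (forall u, dotv u (S *m u) = 0) -> S = 0.
Proof.
move=> symS quad0.
have := quad0 (cv3 1 0 0); have := quad0 (cv3 0 1 0); have := quad0 (cv3 0 0 1).
have := quad0 (cv3 1 1 0); have := quad0 (cv3 1 0 1); have := quad0 (cv3 0 1 1).
rewrite /dotv (sym_mx3_entries symS); mx3_simp => *; apply: mx3_congr; lra.
Qed.

(* The rank-one update of [A] killing the direction [z] is a congruence of [cofm A]. *)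
Lemma quad_reduction_skew A z : A^T = A ->
  dotv z (A *m z) *: A - tens (A *m z) (A *m z) = - (skew z *m cofm A *m skew z).
Proof.
by move=> symA; rewrite /skew /tens /dotv (sym_mx3_entries symA) (cv3_entries z);
  mx3_simp; apply: mx3_congr; ring.
Qed.

Lemma cofm_quad_reduction S u : S^T = S ->
  cofm (dotv u (S *m u) *: S - tens (S *m u) (S *m u)) =
  (dotv u (S *m u) * \det S) *: tens u u.
Proof.
by move=> symS; rewrite /tens /dotv (sym_mx3_entries symS) (cv3_entries u);
  mx3_simp; apply: mx3_congr; ring.
Qed.

Lemma sym_cofm_eq0_rank1 A : A^T = A -> cofm A = 0 -> exists r v, A = r *: tens v v.
Proof.
move=> symA cofA0.
have [quad0|] := classic (forall u, dotv u (A *m u) = 0).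
  by exists 0, 0; rewrite scale0r; exact: sym_quad_eq0.
move=> /not_all_ex_not [z /eqP quad_z]; exists (dotv z (A *m z))^-1, (A *m z).
have /eqP := quad_reduction_skew z symA.
rewrite cofA0 mulmx0 mul0mx oppr0 subr_eq0 => /eqP <-.
by rewrite scalerA mulVf // scale1r.
Qed.

Lemma sym_singular_rank2 S : S^T = S -> \det S = 0 ->
  exists p q w v, S = p *: tens w w + q *: tens v v.
Proof.
move=> symS detS0.
have [quad0|] := classic (forall u, dotv u (S *m u) = 0).
  by exists 0, 0, 0, 0; rewrite !scale0r addr0; exact: sym_quad_eq0.
move=> /not_all_ex_not [u /eqP]; set s := dotv u (S *m u); set w := S *m u => s_neq0.
have symT : (s *: S - tens w w)^T = s *: S - tens w w.
  by rewrite linearB /= linearZ /= symS trmx_tens.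
have cofT0 : cofm (s *: S - tens w w) = 0 by rewrite cofm_quad_reduction // detS0 mulr0 scale0r.
have [k [v defT]] := sym_cofm_eq0_rank1 symT cofT0.
exists s^-1, (s^-1 * k), w, v.
by rewrite -scalerA -scalerDr -defT addrC subrK scalerA mulVf // scale1r.
Qed.

Lemma sigma2_rank2 p q w v :
  sigma2 (p *: tens w w + q *: tens v v) = p * q * (norm2 w * norm2 v - dotv w v ^+ 2).
Proof. by rewrite /sigma2 /tens /norm2 /dotv (cv3_entries w) (cv3_entries v); mx3_simp; ring. Qed.

Lemma tens_sqr_scale r x : 0 <= r -> r *: tens x x = tens (Num.sqrt r *: x) (Num.sqrt r *: x).
Proof.
move=> r_ge0; rewrite /tens linearZ /= -scalemxAl -scalemxAr scalerA.
by rewrite -expr2 sqr_sqrtr.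
Qed.

Lemma tens_sub_split x y :
  tens x x - tens y y = tens (2^-1 *: (x - y)) (x + y) + tens (x + y) (2^-1 *: (x - y)).
Proof.
by rewrite /tens (cv3_entries x) (cv3_entries y); mx3_simp; apply: mx3_congr; field.
Qed.

Lemma rank1_diff_sqr r z : exists x y, r *: tens z z = tens x x - tens y y.
Proof.
have [r_ge0|r_lt0] := lerP 0 r.
  by exists (Num.sqrt r *: z), 0; rewrite -tens_sqr_scale // /tens mul0mx subr0.
exists 0, (Num.sqrt (- r) *: z); rewrite -tens_sqr_scale ?oppr_ge0 ?ltW //.
by rewrite /tens mul0mx sub0r scaleNr opprK.
Qed.

(* Either the two coefficients have opposite signs, or [w] and [v] are colinear. *)
Lemma rank2_diff_sqr p q w v : p * q * (norm2 w * norm2 v - dotv w v ^+ 2) <= 0 ->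
  exists x y, p *: tens w w + q *: tens v v = tens x x - tens y y.
Proof.
move=> sig_le0.
have [pq_le0|pq_gt0] := lerP (p * q) 0.
  have [[p_ge0 q_le0]|[p_le0 q_ge0]] : (0 <= p /\ q <= 0) \/ (p <= 0 /\ 0 <= q).
    by case: (lerP 0 p); case: (lerP 0 q); nra.
  - exists (Num.sqrt p *: w), (Num.sqrt (- q) *: v).
    by rewrite -!tens_sqr_scale ?oppr_ge0 // scaleNr opprK.
  - exists (Num.sqrt q *: v), (Num.sqrt (- p) *: w).
    by rewrite -!tens_sqr_scale ?oppr_ge0 // scaleNr opprK addrC.
have cs_eq : dotv w v ^+ 2 = norm2 w * norm2 v.
  by have := cauchy_schwarz_dotv w v; nra.
have [->|w_neq0] := eqVneq w 0; first by rewrite /tens mul0mx scaler0 add0r; exact: rank1_diff_sqr.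
rewrite (colinear_of_cauchy_schwarz_eq w_neq0 cs_eq); set t := _ / _.
have -> : p *: tens w w + q *: tens (t *: w) (t *: w) = (p + q * t ^+ 2) *: tens w w.
  by rewrite /tens (cv3_entries w); mx3_simp; apply: mx3_congr; ring.
exact: rank1_diff_sqr.
Qed.

Lemma sym_singular_split S : S^T = S -> \det S = 0 -> sigma2 S <= 0 ->
  exists m c, S = tens m c + tens c m.
Proof.
move=> symS detS0; have [p [q [w [v defS]]]] := sym_singular_rank2 symS detS0.
rewrite defS sigma2_rank2 => /rank2_diff_sqr [x [y ->]].
by exists (2^-1 *: (x - y)), (x + y); exact: tens_sub_split.
Qed.

End SymmetricSplitting.

Section RankOneConnection.
Variable R : realType.
Implicit Types (F G C Q : 'M[R]_3) (b c m : 'cV[R]_3).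

Lemma sigma2_sub1 C : sigma2 (C - 1%:M) = \det C - \tr C + 2%:R - \det (C - 1%:M).
Proof. by rewrite /sigma2 (mx3_entries C); mx3_simp; ring. Qed.

Lemma det_cauchy_green_rank1_sub1 b m :
  \det ((1%:M + tens b m)^T *m (1%:M + tens b m) - 1%:M) = 0.
Proof. by rewrite /tens (cv3_entries b) (cv3_entries m); mx3_simp; ring. Qed.

Lemma det_sub_mxtrace_cauchy_green_rank1 b m :
  \det ((1%:M + tens b m)^T *m (1%:M + tens b m)) -
  \tr ((1%:M + tens b m)^T *m (1%:M + tens b m)) + 2%:R = dotv b m ^+ 2 - norm2 b * norm2 m.
Proof. by rewrite /tens /norm2 /dotv (cv3_entries b) (cv3_entries m); mx3_simp; ring. Qed.

Lemma cauchy_green_rank1_factor m c d : 0 < d ->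
  d ^+ 2 = \det (1%:M + (tens m c + tens c m)) ->
  exists b m', (1%:M + tens b m')^T *m (1%:M + tens b m') = 1%:M + (tens m c + tens c m)
               /\ \det (1%:M + tens b m') = d.
Proof.
move=> d_gt0 detC.
have [m0|m_neq0] := eqVneq m 0.
  move: detC; rewrite m0 /tens !mul0mx trmx0 mulmx0 !addr0 det1 => d2.
  have -> : d = 1 by nra.
  by exists 0, 0; rewrite mul0mx addr0 trmx1 mulmx1 det1.
have nm_gt0 : 0 < norm2 m.
  by rewrite lt_def norm2_ge0 andbT; apply: contra_neq m_neq0; exact: norm2_eq0.
have {}detC : d ^+ 2 = (dotv c m + 1) ^+ 2 - norm2 m * norm2 c.
  by rewrite detC /tens /norm2 /dotv (cv3_entries m) (cv3_entries c); mx3_simp; ring.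
(* [t] is the root of [norm2 (c - t *: m) = 2 t] making the [m ⊗ m] term vanish *)
set t := (dotv c m + 1 - d) / norm2 m.
exists (c - t *: m), m; split.
  have -> : (1%:M + tens (c - t *: m) m)^T *m (1%:M + tens (c - t *: m) m) =
      1%:M + (tens m c + tens c m) + (norm2 (c - t *: m) - 2 * t) *: tens m m.
    by rewrite /tens /norm2 /dotv (cv3_entries m) (cv3_entries c); mx3_simp; apply: mx3_congr; ring.
  suff -> : norm2 (c - t *: m) - 2 * t = 0 by rewrite scale0r addr0.
  have -> : norm2 (c - t *: m) = norm2 c - 2 * t * dotv c m + t ^+ 2 * norm2 m.
    by rewrite /norm2 /dotv (cv3_entries m) (cv3_entries c); mx3_simp; ring.
  rewrite /t; move: detC (lt0r_neq0 nm_gt0).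
  set N := norm2 m; set P := dotv c m => detC N_neq0.
  have -> : norm2 c = ((P + 1) ^+ 2 - d ^+ 2) / N by rewrite detC; field.
  by field.
have -> : \det (1%:M + tens (c - t *: m) m) = dotv c m + 1 - t * norm2 m.
  by rewrite /tens /norm2 /dotv (cv3_entries m) (cv3_entries c); mx3_simp; ring.
by rewrite /t; field; exact: lt0r_neq0.
Qed.

Lemma cauchy_green_rotate Q F : Q^T *m Q = 1%:M -> (Q *m F)^T *m (Q *m F) = F^T *m F.
Proof. by move=> QTQ; rewrite trmx_mul mulmxA -(mulmxA F^T) QTQ mulmx1. Qed.

Lemma rotation_of_cauchy_green F G : \det F != 0 ->
  G^T *m G = F^T *m F -> \det G = \det F -> is_SO3 (G *m invmx F).
Proof.
move=> detF_neq0 CG detG; have unitF : F \in unitmx by rewrite unitmxE unitfE.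
split; last by rewrite det_mulmx detG det_inv mulfV.
rewrite trmx_mul -mulmxA (mulmxA G^T) CG !mulmxA -trmx_mul mulmxV //.
by rewrite trmx1 mul1mx mulmxV.
Qed.

Lemma rank_one_connection F : 0 < \det F ->
  (exists Q b m, is_SO3 Q /\ Q *m F - 1%:M = tens b m) <->
  \det (F^T *m F - 1%:M) = 0 /\ \det (F^T *m F) - \tr (F^T *m F) + 2%:R <= 0.
Proof.
move=> detF_gt0; split.
  case=> Q [b [m [[QTQ _] QF]]].
  have -> : F^T *m F = (1%:M + tens b m)^T *m (1%:M + tens b m).
    by rewrite -QF addrC subrK cauchy_green_rotate.
  rewrite det_cauchy_green_rank1_sub1 det_sub_mxtrace_cauchy_green_rank1.
  by split=> //; have := cauchy_schwarz_dotv b m; lra.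
set C := F^T *m F; case=> detC_sub1 gap_le0.
have symS : (C - 1%:M)^T = C - 1%:M by rewrite linearB /= trmx_mul trmxK trmx1.
have sigma2_le0 : sigma2 (C - 1%:M) <= 0 by rewrite sigma2_sub1 detC_sub1 subr0.
have [m [c defS]] := sym_singular_split symS detC_sub1 sigma2_le0.
have detC : \det F ^+ 2 = \det (1%:M + (tens m c + tens c m)).
  by rewrite -defS addrC subrK /C det_mulmx det_tr expr2.
have [b [m' [CG detG]]] := cauchy_green_rank1_factor detF_gt0 detC.
exists ((1%:M + tens b m') *m invmx F), b, m'; split.
  by apply: rotation_of_cauchy_green; rewrite ?gt_eqF // CG -defS addrC subrK.
have unitF : F \in unitmx by rewrite unitmxE unitfE gt_eqF.
by rewrite -mulmxA mulVmx // mulmx1 addrAC subrr add0r.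
Qed.

End RankOneConnection.

Section MiddleEigenvalue.
Variable R : realType.
Implicit Types (U : 'M[R]_3).

Lemma char_poly_mx3 U :
  char_poly U = 'X^3 - (\tr U)%:P * 'X^2 + (sigma2 U)%:P * 'X - (\det U)%:P.
Proof.
rewrite /sigma2 /char_poly (mx3_entries (char_poly_mx U)) [in RHS](mx3_entries U).
by mx3_simp; rewrite !mxE /= ?mulr1n ?mulr0n !(polyCD, polyCN, polyCB, polyCM); ring.
Qed.

Lemma det_sub1 U : \det (U - 1%:M) = \det U - sigma2 U + \tr U - 1.
Proof. by rewrite /sigma2 (mx3_entries U); mx3_simp; ring. Qed.

Lemma det_add1 U : \det (U + 1%:M) = 1 + \tr U + sigma2 U + \det U.
Proof. by rewrite /sigma2 (mx3_entries U); mx3_simp; ring. Qed.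

Lemma sym_posdef_det_gt0 U : sym_posdef U -> 0 < \det U.
Proof.
case=> symU posU; rewrite (sym_mx3_entries symU) in posU *.
move: posU; set a := U 0 0; set b := U 0 1; set c := U 0 2.
set d := U 1 1; set e := U 1 2; set f := U 2 2 => posU.
have pos x y z : [|| x != 0, y != 0 | z != 0] ->
    0 < x * (a * x + b * y + c * z) + y * (b * x + d * y + e * z) + z * (c * x + e * y + f * z).
  by move/cv3_neq0/posU; rewrite /dotv; mx3_simp.
have d_gt0 : 0 < d by have := pos 0 1 0; rewrite oner_neq0 orbT; lra.
have minor_gt0 : 0 < a * d - b * b.
  by have := pos d (- b) 0; rewrite (lt0r_neq0 d_gt0) => /(_ isT); nra.
have := pos (b * e - c * d) (- (a * e - c * b)) (a * d - b * b).
rewrite (lt0r_neq0 minor_gt0) !orbT => /(_ isT); mx3_simp; nra.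
Qed.

Lemma sym_posdef_add1 U : sym_posdef U -> sym_posdef (U + 1%:M).
Proof.
case=> symU posU; split; first by rewrite linearD /= symU trmx1.
move=> x x_neq0; have := posU x x_neq0; have := norm2_ge0 x.
have -> : dotv x ((U + 1%:M) *m x) = dotv x (U *m x) + norm2 x.
  by rewrite /dotv /norm2 mulmxDl mul1mx mulmxDr mxE.
lra.
Qed.

Lemma det_sqr_sub1 U : \det (U *m U - 1%:M) = \det (U - 1%:M) * \det (U + 1%:M).
Proof. by rewrite -det_mulmx mulmxDr mulmxBl mul1mx mulmx1 addrA subrK. Qed.

Lemma middle_eigenvalue1 U : sym_posdef U -> \det (U *m U - 1%:M) = 0 ->
  \det (U *m U) - \tr (U *m U) + 2%:R <= 0 -> middle_eigenvalue U 1.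
Proof.
move=> posU; have := sym_posdef_det_gt0 (sym_posdef_add1 posU).
rewrite /middle_eigenvalue char_poly_mx3 det_sqr_sub1 det_add1 det_sub1.
have -> : \det (U *m U) - \tr (U *m U) + 2%:R = \det U ^+ 2 - (\tr U ^+ 2 - 2 * sigma2 U) + 2.
  by rewrite /sigma2 (mx3_entries U); mx3_simp; ring.
set t := \tr U; set s := sigma2 U; set d := \det U => detU1_gt0 detUU1 gap_le0.
have s_def : s = t - 1 + d by move/eqP: detUU1; rewrite mulf_eq0 => /orP [] /eqP; lra.
rewrite s_def in gap_le0 detU1_gt0.
(* 1 is a root, and the other two are the roots of X^2 - (t - 1) X + d. *)
set p := t - 1; set D := p ^+ 2 - 4 * d.
have D_ge : (p - 2) ^+ 2 <= D by rewrite /D /p; nra.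
have D_ge0 : 0 <= D by have := sqr_ge0 (p - 2); lra.
set r := Num.sqrt D; have r2 : r ^+ 2 = D by rewrite sqr_sqrtr.
have r_ge0 : 0 <= r by rewrite sqrtr_ge0.
exists ((p - r) / 2), ((p + r) / 2); split; [nra | split; first nra].
have t_def : t = (p - r) / 2 + (p + r) / 2 + 1 by rewrite /p; field.
have d_def : d = (p - r) / 2 * ((p + r) / 2).
  have -> : (p - r) / 2 * ((p + r) / 2) = (p ^+ 2 - r ^+ 2) / 4 by field.
  by rewrite r2 /D; field.
rewrite s_def; move: t_def d_def; clearbody r p.
set l1 := (p - r) / 2; set l3 := (p + r) / 2 => -> ->.
by rewrite !(polyCD, polyCN, polyCB, polyCM); ring.
Qed.

Lemma middle_eigenvalue1_det U : middle_eigenvalue U 1 -> \det (U *m U - 1%:M) = 0.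
Proof.
case=> l1 [l3 [_ [_ charU]]].
have : (char_poly U).[1] = 0 by rewrite charU !hornerE; ring.
rewrite char_poly_mx3 !hornerE /= ?expr1n ?mulr1 => root1.
rewrite det_sqr_sub1 det_sub1; suff -> : \det U - sigma2 U + \tr U - 1 = 0 by rewrite mul0r.
lra.
Qed.

End MiddleEigenvalue.

Section HalfTurn.
Variable R : realType.
Implicit Types (e : 'cV[R]_3).

Definition half_turn e : 'M[R]_3 := - 1%:M + 2%:R *: tens e e.

Lemma trmx_half_turn e : (half_turn e)^T = half_turn e.
Proof. by rewrite /half_turn linearD linearN /= linearZ /= trmx1 trmx_tens. Qed.

Lemma half_turn_sqr e : norm2 e = 1 -> half_turn e *m half_turn e = 1%:M.
Proof.
move=> unit_e; have : half_turn e *m half_turn e = 1%:M + (4 * (norm2 e - 1)) *: tens e e.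
  by rewrite /half_turn /tens /norm2 /dotv (cv3_entries e); mx3_simp; apply: mx3_congr; ring.
by rewrite unit_e subrr mulr0 scale0r addr0.
Qed.

Lemma det_half_turn e : norm2 e = 1 -> \det (half_turn e) = 1.
Proof.
move=> unit_e; have -> : \det (half_turn e) = 2 * norm2 e - 1.
  by rewrite /half_turn /tens /norm2 /dotv (cv3_entries e); mx3_simp; ring.
by rewrite unit_e; lra.
Qed.

Lemma mxtrace_half_turn_conj e (M : 'M[R]_3) : norm2 e = 1 ->
  \tr (half_turn e *m M *m half_turn e) = \tr M.
Proof.
move=> unit_e; have -> : \tr (half_turn e *m M *m half_turn e) =
    \tr M + 4 * (norm2 e - 1) * dotv e (M *m e).
  by rewrite /half_turn /tens /norm2 /dotv (mx3_entries M) (cv3_entries e); mx3_simp; ring.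
by rewrite unit_e subrr mulr0 mul0r addr0.
Qed.

End HalfTurn.

Section Pencil.
Variable R : realType.
Implicit Types (S U X : 'M[R]_3) (a n w x y : 'cV[R]_3).

Lemma interp_rank1 U a n (f : R) : f *: (U + tens a n) + (1 - f) *: U = U + f *: tens a n.
Proof. by rewrite scalerDr scalerBl scale1r addrC addrA subrK. Qed.

Lemma det_add_scale_tens U a n (f : R) :
  \det (U + f *: tens a n) = \det U + f * (\det (U + tens a n) - \det U).
Proof. by rewrite /tens (mx3_entries U) (cv3_entries a) (cv3_entries n); mx3_simp; ring. Qed.

Lemma det_sym_pencil S w n (al f : R) :
  \det (S + f *: (tens w n + tens n w) + f ^+ 2 *: (al *: tens n n)) =
  \det S + f * (dotv w (cofm S *m n) + dotv n (cofm S *m w)) +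
  f ^+ 2 * (\det (S + (tens w n + tens n w) + al *: tens n n) - \det S -
          (dotv w (cofm S *m n) + dotv n (cofm S *m w))).
Proof. by rewrite /tens /dotv (mx3_entries S) (cv3_entries w) (cv3_entries n); mx3_simp; ring. Qed.

Lemma dotv_cofm_sym S x y : S^T = S -> dotv x (cofm S *m y) = dotv y (cofm S *m x).
Proof.
by move=> symS; rewrite /dotv (sym_mx3_entries symS) (cv3_entries x) (cv3_entries y); mx3_simp; ring.
Qed.

Lemma dotv_mulmx_sym U X a n : U^T = U -> dotv (U *m a) (X *m n) = dotv a (U *m X *m n).
Proof. by move=> symU; rewrite /dotv trmx_mul symU !mulmxA. Qed.

Variables (U : 'M[R]_3) (a n : 'cV[R]_3).
Hypothesis symU : U^T = U.

Local Notation F f := (U + f *: tens a n).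
Local Notation CG f := ((F f)^T *m F f).

Lemma mxtrace_cauchy_green_pencil (f : R) :
  \tr (CG f) = \tr (U *m U) + f * (2 * dotv a (U *m n)) + f ^+ 2 * (norm2 a * norm2 n).
Proof.
rewrite /tens /norm2 /dotv (sym_mx3_entries symU) (cv3_entries a) (cv3_entries n).
by mx3_simp; ring.
Qed.

Lemma cauchy_green_pencil (f : R) :
  CG f - 1%:M = (U *m U - 1%:M) + f *: (tens (U *m a) n + tens n (U *m a)) +
                f ^+ 2 *: (norm2 a *: tens n n).
Proof.
rewrite /tens /norm2 /dotv (sym_mx3_entries symU) (cv3_entries a) (cv3_entries n).
by mx3_simp; apply: mx3_congr; ring.
Qed.

Lemma det_cauchy_green_pencil_sub1 (f : R) :
  let cc2 := dotv a (U *m cofm (U *m U - 1%:M) *m n) in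
  \det (CG f - 1%:M) = \det (CG 0 - 1%:M) + f * (2 * cc2) +
                       f ^+ 2 * (\det (CG 1 - 1%:M) - \det (CG 0 - 1%:M) - 2 * cc2).
Proof.
move=> cc2; rewrite !cauchy_green_pencil det_sym_pencil expr0n /= !scale0r !addr0 expr1n !scale1r.
have symUU1 : (U *m U - 1%:M)^T = U *m U - 1%:M by rewrite linearB /= trmx_mul symU trmx1.
rewrite (dotv_cofm_sym n (U *m a) symUU1) dotv_mulmx_sym // -/cc2.
by ring.
Qed.

Section Twins.
Variables (e : 'cV[R]_3) (Rh : 'M[R]_3).
Hypotheses (unit_e : norm2 e = 1) (Rh_SO3 : is_SO3 Rh).
Hypothesis twin : Rh *m (half_turn e *m U *m half_turn e) = U + tens a n.

Lemma twin_det : \det (U + tens a n) = \det U.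
Proof. by rewrite -twin !det_mulmx Rh_SO3.2 det_half_turn // !mul1r mulr1. Qed.

Lemma twin_cauchy_green :
  (U + tens a n)^T *m (U + tens a n) = half_turn e *m (U *m U) *m half_turn e.
Proof.
rewrite -twin cauchy_green_rotate ?Rh_SO3.1 // !trmx_mul trmx_half_turn symU -!mulmxA.
by rewrite (mulmxA (half_turn e) (half_turn e)) half_turn_sqr // mul1mx.
Qed.

Lemma twin_dotv : 2 * dotv a (U *m n) = - (norm2 a * norm2 n).
Proof.
have := mxtrace_cauchy_green_pencil 1; rewrite scale1r twin_cauchy_green.
by rewrite mxtrace_half_turn_conj // expr1n !mul1r; lra.
Qed.

Lemma det_twin_pencil (f : R) : \det (F f) = \det U.
Proof. by rewrite det_add_scale_tens twin_det subrr mulr0 addr0. Qed.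

Lemma det_sub_mxtrace_twin_pencil (f : R) :
  \det (CG f) - \tr (CG f) + 2%:R =
  \det (U *m U) - \tr (U *m U) + 2%:R + norm2 a * norm2 n * (f - f ^+ 2).
Proof.
rewrite !det_mulmx det_tr det_twin_pencil mxtrace_cauchy_green_pencil twin_dotv.
by ring.
Qed.

Lemma det_twin_pencil_sub1 (f : R) :
  \det (CG f - 1%:M) =
  \det (U *m U - 1%:M) + 2 * dotv a (U *m cofm (U *m U - 1%:M) *m n) * (f - f ^+ 2).
Proof.
rewrite det_cauchy_green_pencil_sub1 /= scale1r twin_cauchy_green scale0r addr0 symU.
have -> : half_turn e *m (U *m U) *m half_turn e - 1%:M =
          half_turn e *m (U *m U - 1%:M) *m half_turn e.
  by rewrite mulmxBr mulmx1 mulmxBl half_turn_sqr.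
by rewrite !det_mulmx det_half_turn // mul1r mulr1; ring.
Qed.

End Twins.
End Pencil.

Theorem theorem1 (R : realType) (U : 'M[R]_3) (e : 'cV[R]_3)
    (Rh : 'M[R]_3) (a n : 'cV[R]_3) :
  sym_posdef U ->
  norm2 e = 1 ->
  is_SO3 Rh ->
  a != 0 -> n != 0 ->
  Rh *m ((- 1%:M + 2%:R *: tens e e) *m U *m (- 1%:M + 2%:R *: tens e e))
    = U + tens a n ->
  (forall f : R, 0 <= f <= 1 ->
     exists (Q : 'M[R]_3) (b m : 'cV[R]_3),
       is_SO3 Q /\
       Q *m (f *: (U + tens a n) + (1 - f) *: U) - 1%:M = tens b m)
  <->
  (middle_eigenvalue U 1 /\
   dotv a (U *m cofm (U *m U - 1%:M) *m n) = 0 /\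
   \tr (U *m U) - \det (U *m U) - norm2 a * norm2 n / 4%:R - 2%:R >= 0).
Proof.
move=> posU unit_e Rh_SO3 _ _ twin; have symU := posU.1.
have connection f : (exists Q b m, is_SO3 Q /\
    Q *m (f *: (U + tens a n) + (1 - f) *: U) - 1%:M = tens b m) <->
    \det (U *m U - 1%:M) + 2 * dotv a (U *m cofm (U *m U - 1%:M) *m n) * (f - f ^+ 2) = 0 /\
    \det (U *m U) - \tr (U *m U) + 2%:R + norm2 a * norm2 n * (f - f ^+ 2) <= 0.
  rewrite interp_rank1 -(det_twin_pencil_sub1 symU unit_e Rh_SO3 twin).
  rewrite -(det_sub_mxtrace_twin_pencil symU unit_e Rh_SO3 twin); apply: rank_one_connection.
  by rewrite (det_twin_pencil unit_e Rh_SO3 twin); exact: sym_posdef_det_gt0.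
have nan_ge0 : 0 <= norm2 a * norm2 n by rewrite mulr_ge0 ?norm2_ge0.
split=> [conn | [mid [cc2 cc3]] f f01].
  have f01_0 : (0 : R) <= (0 : R) <= (1 : R) by apply/andP; split; lra.
  have f01_half : (0 : R) <= 2^-1 <= (1 : R) by apply/andP; split; lra.
  have [D0 gap0] := (connection 0).1 (conn 0 f01_0).
  have [D_half gap_half] := (connection 2^-1).1 (conn _ f01_half).
  rewrite expr0n /= subr0 !mulr0 !addr0 in D0 gap0.
  rewrite D0 add0r expr2 in D_half.
  by split; [exact: middle_eigenvalue1 | split; lra].
apply/connection; rewrite middle_eigenvalue1_det // cc2; split; first by ring.
by have := sqr_ge0 (f - 2^-1); nra.
Qed.
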